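(* Let $k\ge2$, $\ell\ge1$, and let $Z'_k(\ell)$ be the sequence $\mathrm{rev}_{k,\ell}(0),\mathrm{rev}_{k,\ell}(1),\dots,\mathrm{rev}_{k,\ell}(k^\ell-1)$. (1) If $b_1,\dots,b_d$ is a palindromic sequence of integers in $\{0,\dots,k^\ell-1\}$ that is strictly decreasing, then $b_1,\dots,b_d$ is a subsequence of $Z'_k(\ell)$ (its terms appear in $Z'_k(\ell)$ in this order). (2) Conversely, if a subsequence of $Z'_k(\ell)$ is palindromic, then it is strictly decreasing.
   Context: For integers $k\ge2$, $\ell\ge1$ and $0\le x<k^\ell$, write $x$ in base $k$ as a string of exactly $\ell$ digits (padding with leading zeros); $\mathrm{rev}_{k,\ell}(x)$ is the integer whose $\ell$-digit base-$k$ string is the reversal of that of $x$. A sequence $b_1,\dots,b_d$ of integers in $\{0,\dots,k^\ell-1\}$ is palindromic (with respect to $k$ and $\ell$) if $\mathrm{rev}_{k,\ell}(b_i)=b_{d+1-i}$ for all $i\in\{1,\dots,d\}$. $Z'_k(\ell)$ is the stable configuration $Z_k(\ell)$ of labeled chip-firing (with $1$ subtracted from each entry), which equals the radix-$k$ digit-reversal permutation. *)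

From mathcomp Require Import all_boot.
Set Implicit Arguments. Unset Strict Implicit. Unset Printing Implicit Defensive.

Definition digit (k i x : nat) : nat := (x %/ k ^ i) %% k.

(* rev_{k,l}(x): the integer whose l-digit base-k string is the reversal of
   the l-digit base-k string of x (x < k^l). The digit at position i
   (from the right) is moved to position l-1-i. *)
Definition revkl (k l x : nat) : nat :=
  \sum_(i < l) digit k i x * k ^ (l.-1 - i).

Definition Zprime (k l : nat) : seq nat := [seq revkl k l x | x <- iota 0 (k ^ l)].

(* b_1..b_d is palindromic: rev_{k,l}(b_i) = b_{d+1-i} for all i in 1..d
   (written 0-indexed: for i < d, rev(b_i) = b_{d-1-i}). *)
Definition palindromic (k l : nat) (b : seq nat) : Prop :=
  forall i, i < size b -> revkl k l (nth 0 b i) = nth 0 b ((size b).-1 - i).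

Definition strictly_decreasing (b : seq nat) : bool := sorted (fun x y => y < x) b.

(* rev_{k,l} is an involution of [0, k^l), so Z'_k(l) lists every such number exactly once,
   sorted by increasing reversal. For a palindromic sequence the reversal reads the sequence
   backwards, so increasing in the reversal order is the same as decreasing in the usual
   order. Hence a palindrome is a subsequence of Z'_k(l) iff it is strictly decreasing. *)
From mathcomp Require Import all_boot zify.
Set Implicit Arguments. Unset Strict Implicit. Unset Printing Implicit Defensive.

Section SortedSubseq.

Variables (T : eqType) (r : rel T).
Hypotheses (r_trans : transitive r) (r_irr : irreflexive r).

Lemma sorted_subset_subseq s1 s2 :
  sorted r s1 -> sorted r s2 -> {subset s1 <= s2} -> subseq s1 s2.
Proof.
move=> s1r s2r s12; have -> : s1 = filter (mem s1) s2.
  apply: (irr_sorted_eq r_trans r_irr) => //; first exact: sorted_filter.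
  move=> x; rewrite mem_filter /=.
  by case x_in: (x \in s1) => //=; rewrite s12.
exact: filter_subseq.
Qed.

End SortedSubseq.

Section DigitReversal.

Variable k : nat.
Definition revkl_lt_rel l : rel nat := fun x y => revkl k l x < revkl k l y.

Lemma palindromic_sortedE l b :
  palindromic k l b -> sorted (revkl_lt_rel l) b = strictly_decreasing b.
Proof.
move=> b_pal; apply/(sortedP 0)/(sortedP 0) => b_sorted i i_lt.
- have := b_sorted (size b - i.+2) ltac:(lia).
  rewrite /revkl_lt_rel !b_pal; [|lia|lia].
  have -> : (size b).-1 - (size b - i.+2) = i.+1 by lia.
  by have -> : (size b).-1 - (size b - i.+2).+1 = i by lia.
- rewrite /revkl_lt_rel !b_pal; [|lia|lia].
  have -> : (size b).-1 - i = ((size b).-1 - i.+1).+1 by lia.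
  apply: b_sorted; lia.
Qed.

Hypothesis k_gt0 : 0 < k.

Lemma revklS l x : revkl k l.+1 x = x %% k * k ^ l + revkl k l (x %/ k).
Proof.
rewrite /revkl big_ord_recl /= /digit expn0 divn1 subn0; congr (_ + _).
apply: eq_bigr => i _; rewrite /bump /= add1n expnS divnMA.
congr (_ * k ^ _); lia.
Qed.

Lemma digit_modn i l x : i < l -> digit k i (x %% k ^ l) = digit k i x.
Proof.
move=> il; rewrite /digit divn_modl; last by apply: dvdn_exp2l; lia.
rewrite -expnB; [|lia|lia].
have -> : l - i = (l - i).-1.+1 by lia.
by rewrite expnS modn_dvdm // dvdn_mulr.
Qed.

Lemma revklSr l x : revkl k l.+1 x = k * revkl k l (x %% k ^ l) + digit k l x.
Proof.
rewrite /revkl big_ord_recr /= subnn expn0 muln1; congr (_ + _).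
rewrite big_distrr; apply: eq_bigr => i _ /=.
rewrite digit_modn // mulnCA -expnS; congr (_ * k ^ _).
have := ltn_ord i; lia.
Qed.

Lemma revkl_lt l x : revkl k l x < k ^ l.
Proof.
elim: l x => [|l IHl] x; first by rewrite /revkl big_ord0.
rewrite revklS expnS.
have := IHl (x %/ k); have : x %% k < k by rewrite ltn_mod.
nia.
Qed.

Lemma revklK l x : x < k ^ l -> revkl k l (revkl k l x) = x.
Proof.
elim: l x => [|l IHl] x x_lt; first by rewrite /revkl big_ord0; lia.
have kl_gt0 : 0 < k ^ l by rewrite expn_gt0 k_gt0.
have top_lt : digit k l x < k by rewrite /digit ltn_mod.
rewrite [revkl k l.+1 x]revklSr revklS [k * _]mulnC modnMDl modn_small //.
rewrite divnMDl // divn_small // addn0 IHl ?ltn_mod //.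
rewrite /digit modn_small; last by rewrite ltn_divLR // -expnS.
by rewrite -divn_eq.
Qed.

Lemma mem_Zprime l x : x < k ^ l -> x \in Zprime k l.
Proof.
move=> x_lt; rewrite -(revklK x_lt); apply: map_f.
by rewrite mem_iota add0n revkl_lt.
Qed.

Lemma Zprime_sorted l : sorted (revkl_lt_rel l) (Zprime k l).
Proof.
apply/(sortedP 0) => i; rewrite /Zprime size_map size_iota => i_lt.
rewrite /revkl_lt_rel !(nth_map 0) ?size_iota; try lia.
by rewrite !nth_iota ?revklK //; lia.
Qed.

End DigitReversal.

Theorem lemma7p1 (k l : nat) (hk : 2 <= k) (hl : 1 <= l) :
  (forall b : seq nat,
      all (fun x => x < k ^ l) b -> palindromic k l b -> strictly_decreasing b ->
      subseq b (Zprime k l))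
  /\
  (forall b : seq nat,
      subseq b (Zprime k l) -> palindromic k l b -> strictly_decreasing b).
Proof.
have k_gt0 : 0 < k by lia.
have rel_trans : transitive (revkl_lt_rel k l) by move=> y x z; apply: ltn_trans.
have rel_irr : irreflexive (revkl_lt_rel k l) by move=> x; apply: ltnn.
split=> b.
- move=> /allP b_lt b_pal b_dec.
  apply: (sorted_subset_subseq rel_trans rel_irr).
  + by rewrite palindromic_sortedE.
  + exact: Zprime_sorted.
  + by move=> x /b_lt; apply: mem_Zprime.
- move=> b_sub b_pal; rewrite -(palindromic_sortedE b_pal).
  exact: (subseq_sorted rel_trans b_sub (Zprime_sorted k_gt0 l)).
Qed.
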